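(* Let $\mathcal M$ be an oriented matroid on ground set $E$ and $e\in E$. (1) If $e$ is a loop, then $\mathcal M$ is pure if and only if $\mathcal M\setminus e$ is pure. (2) If $e$ is a coloop, then $\mathcal M$ is pure if and only if $\mathcal M/e$ is pure.
   Context: Oriented matroids are given by signed circuits $X=(X^+,X^-)$ on $E$. $e$ is a loop if $(\{e\},\emptyset)$ is a circuit; $e$ is a coloop if $e$ lies in the support $X^+\cup X^-$ of no circuit. Deletion $\mathcal M\setminus e$: circuits of $\mathcal M$ not containing $e$ in their support, on ground set $E\setminus\{e\}$. Contraction $\mathcal M/e$ (for $e$ not a loop): the circuits are the inclusion-minimal (w.r.t. $Y\le X$ iff $Y^+\subseteq X^+$ and $Y^-\subseteq X^-$) nonempty signed sets among $(X^+\setminus\{e\},X^-\setminus\{e\})$, $X$ a circuit of $\mathcal M$. Two subsets $I,J$ are separated if no circuit $X$ satisfies $X^+\subseteq I\setminus J$, $X^-\subseteq J\setminus I$; an oriented matroid is pure if every pairwise-separated collection maximal by inclusion has the maximum possible cardinality. *)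

From mathcomp Require Import all_boot.
Set Implicit Arguments. Unset Strict Implicit. Unset Printing Implicit Defensive.

(* A signed set X = (X^+, X^-). *)
Definition signed (T : finType) := ({set T} * {set T})%type.

Section OM.
Variable T : finType.

Definition supp (X : signed T) : {set T} := X.1 :|: X.2.
Definition negs (X : signed T) : signed T := (X.2, X.1).
Definition empty_signed : signed T := (set0, set0).

Definition conf (Y X : signed T) : bool := (Y.1 \subset X.1) && (Y.2 \subset X.2).

Definition is_OM (E : {set T}) (C : {set signed T}) : Prop :=
  [/\ (forall X, X \in C -> [disjoint X.1 & X.2] /\ supp X \subset E),
      empty_signed \notin C,
      (forall X, X \in C -> negs X \in C),
      (forall X Y, X \in C -> Y \in C -> supp X \subset supp Y ->
                   X = Y \/ X = negs Y) &
      (forall X Y f, X \in C -> Y \in C -> X <> negs Y ->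
                   f \in X.1 :&: Y.2 ->
                   exists2 Z, Z \in C &
                     (Z.1 \subset (X.1 :|: Y.1) :\ f) /\
                     (Z.2 \subset (X.2 :|: Y.2) :\ f))].

Definition is_loop (C : {set signed T}) (e : T) : bool := ([set e], set0) \in C.
Definition is_coloop (C : {set signed T}) (e : T) : bool :=
  [forall X in C, e \notin supp X].

Definition deletion (C : {set signed T}) (e : T) : {set signed T} :=
  [set X in C | e \notin supp X].

Definition restr_e (C : {set signed T}) (e : T) : {set signed T} :=
  [set (X.1 :\ e, X.2 :\ e) | X in C].
Definition contraction (C : {set signed T}) (e : T) : {set signed T} :=
  [set Y in restr_e C e | (Y != empty_signed) &&
     [forall Z in restr_e C e, ((Z != empty_signed) && conf Z Y) ==> (Z == Y)]].

Definition separated (C : {set signed T}) (I J : {set T}) : bool :=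
  ~~ [exists X in C, (X.1 \subset I :\: J) && (X.2 \subset J :\: I)].

Definition pw_separated (E : {set T}) (C : {set signed T}) (S : {set {set T}}) : bool :=
  (S \subset powerset E) && [forall I in S, forall J in S, separated C I J].

Definition pure (E : {set T}) (C : {set signed T}) : Prop :=
  forall S, maxset (pw_separated E C) S ->
    forall S', pw_separated E C S' -> #|S'| <= #|S|.

End OM.

From mathcomp Require Import all_boot.

Set Implicit Arguments.
Unset Strict Implicit.
Unset Printing Implicit Defensive.

(* If e is a loop, the circuits ({e},{}) and ({},{e}) force any two separated
   sets to agree on e; hence deleting e from every member maps
   pairwise-separated collections of M injectively to those of M \ e, and
   maximal collections to maximal ones.  If e is a coloop, no circuit meets e,
   so M / e has the same circuits and separation does not see e; a collection
   S of M \ e then lifts to S together with all I + e, twice as large, and the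
   maximal collections of M are exactly these lifts.  In both cases the
   cardinalities of collections are scaled by a constant (1 or 2), which
   preserves purity. *)

Definition maximal_are_maximum (U : finType) (A : pred {set U}) : Prop :=
  forall S, maxset A S -> forall S', A S' -> #|S'| <= #|S|.

Lemma maximal_are_maximum_transfer (U : finType) (A B : pred {set U}) (k : nat)
    (Phi Psi : {set U} -> {set U}) :
  0 < k ->
  (forall S, A S -> B (Psi S) /\ #|S| <= k * #|Psi S|) ->
  (forall S, maxset A S -> maxset B (Psi S) /\ #|S| = k * #|Psi S|) ->
  (forall S, B S -> A (Phi S) /\ #|Phi S| = k * #|S|) ->
  (forall S, maxset B S -> maxset A (Phi S)) ->
  maximal_are_maximum A <-> maximal_are_maximum B.
Proof.
move=> k_gt0 pwA maxA pwB maxB; split=> maxAB S maxS S' pwS'.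
- have [_ cardS] := pwB _ (maxsetp maxS); have [PhiS' cardS'] := pwB _ pwS'.
  by have := maxAB _ (maxB _ maxS) _ PhiS'; rewrite cardS cardS' leq_pmul2l.
- have [maxPsiS cardS] := maxA _ maxS; have [PsiS' cardS'] := pwA _ pwS'.
  by rewrite (leq_trans cardS') // cardS leq_pmul2l // (maxAB _ maxPsiS).
Qed.

Section Separation.
Variable T : finType.
Implicit Types (E I J K : {set T}) (C : {set signed T}) (S : {set {set T}}).

Lemma setD1_id (e : T) K : e \notin K -> K :\ e = K.
Proof. by move=> eK; apply/setDidPl; rewrite disjoint_sym disjoints1. Qed.

Lemma setD1_inj (e : T) I J : (e \in I) = (e \in J) -> I :\ e = J :\ e -> I = J.
Proof.
move=> eIJ /setP IJ; apply/setP=> x; have := IJ x; rewrite !inE.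
by case: (x =P e) => [->|].
Qed.

Lemma setD_setD1 (e : T) I J : (I :\ e) :\: (J :\ e) \subset I :\: J.
Proof. by apply/subsetP=> x; rewrite !inE; case: (x =P e). Qed.

Lemma subset_setD_setD1 (e : T) K I J :
  e \notin K -> K \subset I :\: J -> K \subset (I :\ e) :\: (J :\ e).
Proof.
move=> eK /subsetP KIJ; apply/subsetP=> x xK; have := KIJ x xK; rewrite !inE.
by have -> : x != e by apply: contraNneq eK => <-.
Qed.

Lemma pw_separatedP E C S :
  reflect ((forall I, I \in S -> I \subset E) /\
           (forall I J, I \in S -> J \in S -> separated C I J))
          (pw_separated E C S).
Proof.
apply: (iffP andP) => [[/subsetP SE /forallP sepS]|[SE sepS]]; split.
- by move=> I /SE; rewrite powersetE.
- by move=> I J IS JS; have /implyP/(_ IS)/forallP/(_ J)/implyP := sepS I; apply.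
- by apply/subsetP=> I /SE; rewrite powersetE.
- apply/forallP=> I; apply/implyP=> IS.
  by apply/forallP=> J; apply/implyP; apply: sepS.
Qed.

Lemma pw_separated_setD1_notin (e : T) E C S :
  pw_separated (E :\ e) C S -> {in S, forall K, e \notin K}.
Proof. by move=> /pw_separatedP[SE _] K /SE/subsetD1P[]. Qed.

Lemma separated_sub C C' I J I' J' :
  C' \subset C -> I' :\: J' \subset I :\: J -> J' :\: I' \subset J :\: I ->
  separated C I J -> separated C' I' J'.
Proof.
move=> sC sIJ sJI; apply: contra => /existsP[X /and3P[XC' X1 X2]].
apply/existsP; exists X.
by rewrite (subsetP sC _ XC') (subset_trans X1 sIJ) (subset_trans X2 sJI).
Qed.

Lemma separated_setD1 C C' (e : T) I J :
  C' \subset C -> separated C I J -> separated C' (I :\ e) (J :\ e).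
Proof. by move=> sC; apply: separated_sub; rewrite ?setD_setD1. Qed.

Lemma separated_setD1_inv C C' (e : T) I J :
  (forall X, X \in C -> X.1 \subset I :\: J -> X.2 \subset J :\: I ->
     [/\ X \in C', e \notin X.1 & e \notin X.2]) ->
  separated C' (I :\ e) (J :\ e) -> separated C I J.
Proof.
move=> witness; apply: contra => /existsP[X /and3P[XC X1 X2]].
have [XC' eX1 eX2] := witness X XC X1 X2.
by apply/existsP; exists X; rewrite XC' !subset_setD_setD1.
Qed.

Lemma deletion_sub C (e : T) : deletion C e \subset C.
Proof. by apply/subsetP=> X; rewrite inE => /andP[]. Qed.

Lemma separated_deletion_inv C (e : T) I J :
  (e \in I) = (e \in J) ->
  separated (deletion C e) (I :\ e) (J :\ e) -> separated C I J.
Proof.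
move=> eIJ; apply: separated_setD1_inv => X XC X1 X2.
have eX1 : e \notin X.1 by apply/negP=> /(subsetP X1); rewrite inE eIJ andNb.
have eX2 : e \notin X.2 by apply/negP=> /(subsetP X2); rewrite inE eIJ andNb.
by rewrite inE XC /supp inE negb_or eX1 eX2.
Qed.

Lemma pw_separated_setD1 (e : T) E C C' S :
  C' \subset C -> pw_separated E C S ->
  pw_separated (E :\ e) C' [set I :\ e | I in S].
Proof.
move=> sC /pw_separatedP[SE sepS]; apply/pw_separatedP; split.
- by move=> _ /imsetP[I IS ->]; apply/setSD/SE.
- move=> _ _ /imsetP[I IS ->] /imsetP[J JS ->].
  exact: separated_setD1 sC (sepS _ _ IS JS).
Qed.

Lemma maxset_pw_separated_neq0 E C S :
  empty_signed T \notin C -> maxset (pw_separated E C) S -> S != set0.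
Proof.
move=> C_neq0 maxS; apply/eqP=> S0.
suff pw0 : pw_separated E C [set set0].
  have := maxsetsup maxS pw0; rewrite S0 sub0set => /(_ isT)/setP/(_ set0).
  by rewrite !inE eqxx.
apply/pw_separatedP; split=> [I|I J]; rewrite !inE => /eqP-> //.
  exact: sub0set.
move=> /eqP->; apply: contra C_neq0 => /existsP[[X1 X2] /and3P[XC]].
by rewrite setD0 !subset0 => /eqP/= X1_0 /eqP/= X2_0; subst.
Qed.

End Separation.

Section Loop.
Variables (T : finType) (E : {set T}) (C : {set signed T}) (e : T).
Hypotheses (C_OM : is_OM E C) (eE : e \in E) (e_loop : is_loop C e).
Implicit Types (I J K : {set T}) (S B : {set {set T}}).

Let C_neq0 : empty_signed T \notin C. Proof. by case: C_OM. Qed.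

Lemma loop_separated_mem I J : separated C I J -> (e \in I) = (e \in J).
Proof.
have loopC : ([set e], set0) \in C := e_loop.
have [_ _ C_neg _ _] := C_OM; have loopNC := C_neg _ loopC.
case eI: (e \in I); case eJ: (e \in J) => //; move/negP; case; apply/existsP.
- by exists ([set e], set0); rewrite loopC /= sub0set sub1set inE eI eJ.
- by exists (negs ([set e], set0)); rewrite loopNC /= sub0set sub1set inE eI eJ.
Qed.

Lemma card_pw_separated_setD1 S :
  pw_separated E C S -> #|[set I :\ e | I in S]| = #|S|.
Proof.
move/pw_separatedP=> [_ sepS]; rewrite card_in_imset // => I J IS JS.
exact/setD1_inj/loop_separated_mem/sepS.
Qed.

Lemma lift_setD1 (b : bool) K : e \notin K -> (if b then e |: K else K) :\ e = K.
Proof. by case: b => eK; rewrite ?setU1K ?setD1_id. Qed.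

Lemma pw_separated_lift (b : bool) B :
  pw_separated (E :\ e) (deletion C e) B ->
  pw_separated E C [set (if b then e |: K else K) | K in B].
Proof.
move=> pwB; have eB := pw_separated_setD1_notin pwB.
move/pw_separatedP: pwB => [BE sepB].
have mem_lift K : K \in B -> (e \in if b then e |: K else K) = b.
  by move=> KB; case: b; rewrite ?setU11 ?(negbTE (eB _ KB)).
apply/pw_separatedP; split.
- move=> _ /imsetP[K KB ->]; have KE := subset_trans (BE _ KB) (subD1set E e).
  by case: b {mem_lift}; rewrite ?subUset ?sub1set ?eE.
- move=> _ _ /imsetP[K KB ->] /imsetP[K' KB' ->].
  apply: (@separated_deletion_inv _ _ e); first by rewrite !mem_lift.
  by rewrite !lift_setD1 ?eB // sepB.
Qed.

Lemma pw_separated_of_deletion B :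
  pw_separated (E :\ e) (deletion C e) B -> pw_separated E C B.
Proof. by move/(pw_separated_lift false); rewrite imset_id. Qed.

Lemma maxset_deletion S :
  maxset (pw_separated E C) S ->
  maxset (pw_separated (E :\ e) (deletion C e)) [set I :\ e | I in S].
Proof.
move=> maxS; have /pw_separatedP[_ sepS] := maxsetp maxS.
have [I0 I0S] := set0Pn _ (maxset_pw_separated_neq0 C_neq0 maxS).
apply/maxsetP; split=> [|B pwB sB].
  exact: pw_separated_setD1 (deletion_sub C e) (maxsetp maxS).
have eB := pw_separated_setD1_notin pwB.
set lift := fun K => if e \in I0 then e |: K else K.
have S_lift : S \subset [set lift K | K in B].
  apply/subsetP=> I IS; apply/imsetP; exists (I :\ e).
    exact/(subsetP sB)/imset_f.
  rewrite /lift -(loop_separated_mem (sepS _ _ IS I0S)).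
  by case: ifP => eI; rewrite ?setD1K ?setD1_id ?eI.
rewrite -(maxsetsup maxS (pw_separated_lift _ pwB) S_lift) -imset_comp.
rewrite (eq_in_imset (g := id)) ?imset_id // => K /eB.
exact: lift_setD1.
Qed.

Lemma maxset_of_deletion B :
  maxset (pw_separated (E :\ e) (deletion C e)) B -> maxset (pw_separated E C) B.
Proof.
move=> maxB; have pwB := maxsetp maxB.
apply/maxsetP; split=> [|S pwS sB]; first exact: pw_separated_of_deletion.
have del_neq0 : empty_signed T \notin deletion C e.
  by apply: contra C_neq0; apply/subsetP/deletion_sub.
have [I0 I0B] := set0Pn _ (maxset_pw_separated_neq0 del_neq0 maxB).
have eS K : K \in S -> e \notin K.
  move/pw_separatedP: pwS => [_ sepS] KS.
  rewrite (loop_separated_mem (sepS _ _ KS (subsetP sB _ I0B))).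
  exact: (pw_separated_setD1_notin pwB) I0B.
have setD1_S : [set K :\ e | K in S] = S.
  by rewrite (eq_in_imset (g := id)) ?imset_id // => K /eS /setD1_id.
have := maxsetsup maxB (pw_separated_setD1 e (deletion_sub C e) pwS).
by rewrite setD1_S; apply.
Qed.

Lemma pure_deletion_loop : pure E C <-> pure (E :\ e) (deletion C e).
Proof.
apply: (maximal_are_maximum_transfer (k := 1) (Phi := id)
          (Psi := fun S => [set I :\ e | I in S])).
- by [].
- move=> S pwS; rewrite mul1n card_pw_separated_setD1 //.
  split; [exact: pw_separated_setD1 (deletion_sub C e) pwS | exact: leqnn].
- move=> S maxS; rewrite mul1n card_pw_separated_setD1; last exact: maxsetp.
  split; [exact: maxset_deletion | by []].
- by move=> S /pw_separated_of_deletion; rewrite mul1n.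
- exact: maxset_of_deletion.
Qed.

End Loop.

Section Coloop.
Variables (T : finType) (E : {set T}) (C : {set signed T}) (e : T).
Hypotheses (eE : e \in E) (C_avoid : forall X, X \in C -> e \notin supp X).
Implicit Types (I J K : {set T}) (S B : {set {set T}}).

Lemma separated_setD1_avoid I J : separated C (I :\ e) (J :\ e) = separated C I J.
Proof.
apply/idP/idP; last exact: separated_setD1.
apply: separated_setD1_inv => X XC _ _.
by have := C_avoid XC; rewrite /supp inE negb_or => /andP[].
Qed.

Let double S := S :|: [set e |: I | I in S].

Lemma card_double S : {in S, forall K, e \notin K} -> #|double S| = 2 * #|S|.
Proof.
move=> eS; rewrite cardsU card_in_imset; last first.
  by move=> I J IS JS /(congr1 (fun K => K :\ e)); rewrite !setU1K ?eS.
suff -> : S :&: [set e |: I | I in S] = set0 by rewrite cards0 subn0 mul2n addnn.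
apply/setP=> K; rewrite !inE; apply/negP=> /andP[KS /imsetP[I _ eK]].
by move: (eS _ KS); rewrite eK setU11.
Qed.

Lemma setD1_double S :
  {in S, forall K, e \notin K} -> [set I :\ e | I in double S] = S.
Proof.
move=> eS; rewrite imsetU -imset_comp.
rewrite [in X in X :|: _](eq_in_imset (g := id)) => [|K /eS]; last first.
  exact: setD1_id.
rewrite (eq_in_imset (g := id)) => [|K /eS /= eK]; last by rewrite setU1K.
by rewrite imset_id setUid.
Qed.

Lemma subset_double_setD1 S : S \subset double [set I :\ e | I in S].
Proof.
apply/subsetP=> I IS; rewrite inE; case eI: (e \in I).
  apply/orP; right; apply/imsetP.
  by exists (I :\ e); [exact: imset_f | rewrite setD1K].
by apply/orP; left; apply/imsetP; exists I; rewrite ?setD1_id ?eI.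
Qed.

Lemma mem_double_setD1 S I :
  {in S, forall K, e \notin K} -> I \in double S -> I :\ e \in S.
Proof.
move=> eS; rewrite inE => /orP[IS|/imsetP[K KS ->]].
  by rewrite setD1_id ?eS.
by rewrite setU1K ?eS.
Qed.

Lemma pw_separated_double S :
  pw_separated (E :\ e) C S -> pw_separated E C (double S).
Proof.
move=> pwS; have eS := pw_separated_setD1_notin pwS.
move/pw_separatedP: pwS => [SE sepS]; apply/pw_separatedP; split.
- move=> I; rewrite inE => /orP[IS|/imsetP[K KS ->]].
    exact: subset_trans (SE _ IS) (subD1set E e).
  by rewrite subUset sub1set eE (subset_trans (SE _ KS) (subD1set E e)).
- move=> I J IS JS; rewrite -separated_setD1_avoid.
  by apply: sepS; apply: mem_double_setD1.
Qed.

Lemma maxset_setD1_avoid S :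
  maxset (pw_separated E C) S ->
  maxset (pw_separated (E :\ e) C) [set I :\ e | I in S] /\
  S = double [set I :\ e | I in S].
Proof.
move=> maxS; have pwS := pw_separated_setD1 e (subxx C) (maxsetp maxS).
have S_double := maxsetsup maxS (pw_separated_double pwS) (subset_double_setD1 S).
split=> //; apply/maxsetP; split=> // B pwB sB.
have sdB : S \subset double B by rewrite -S_double; apply/setUSS/imsetS.
rewrite -(setD1_double (pw_separated_setD1_notin pwB)).
by rewrite (maxsetsup maxS (pw_separated_double pwB) sdB).
Qed.

Lemma maxset_double S :
  maxset (pw_separated (E :\ e) C) S -> maxset (pw_separated E C) (double S).
Proof.
move=> maxS; have pwS := maxsetp maxS; have eS := pw_separated_setD1_notin pwS.
apply/maxsetP; split=> [|B pwB sB]; first exact: pw_separated_double.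
have sSB : S \subset [set I :\ e | I in B] by rewrite -(setD1_double eS) imsetS.
have := maxsetsup maxS (pw_separated_setD1 e (subxx C) pwB) sSB.
move=> SB; apply/eqP; rewrite eqEsubset sB andbT -SB.
exact: subset_double_setD1.
Qed.

Lemma pure_setD1_avoid : pure E C <-> pure (E :\ e) C.
Proof.
have setD1_notin S : {in [set I :\ e | I in S], forall K, e \notin K}.
  by move=> _ /imsetP[I _ ->]; rewrite !inE eqxx.
apply: (maximal_are_maximum_transfer (k := 2) (Phi := double)
          (Psi := fun S => [set I :\ e | I in S])).
- by [].
- move=> S pwS; split; first exact: (pw_separated_setD1 e (subxx C) pwS).
  by rewrite -card_double ?subset_leq_card ?subset_double_setD1.
- move=> S /maxset_setD1_avoid[maxS S_double]; split=> //.
  by rewrite -card_double -?S_double.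
- move=> S pwS; split; first exact: pw_separated_double.
  exact/card_double/pw_separated_setD1_notin/pwS.
- exact: maxset_double.
Qed.

End Coloop.

Lemma contraction_coloop (T : finType) E (C : {set signed T}) (e : T) :
  is_OM E C -> is_coloop C e -> contraction C e = C.
Proof.
case=> C_disj C_neq0 _ C_incomp _ /forallP e_coloop.
have restr_C : restr_e C e = C.
  rewrite /restr_e (eq_in_imset (g := id)) ?imset_id // => X XC.
  have /implyP/(_ XC) := e_coloop X; rewrite /supp inE negb_or => /andP[eX1 eX2].
  by rewrite !setD1_id //; case: X {XC} eX1 eX2.
rewrite /contraction restr_C; apply/setP=> Y; rewrite inE.
case YC: (Y \in C) => //=.
have -> : Y != empty_signed T by apply: contraNneq C_neq0 => <-.
apply/forallP=> Z; apply/implyP=> ZC; apply/implyP=> /andP[_ /andP[ZY1 ZY2]].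
have [->//|ZNY] := C_incomp Z Y ZC YC (setUSS ZY1 ZY2).
(* Z = -Y conformal to Y forces Y^+ = Y^-, hence Y = 0 by disjointness. *)
move: ZY1 ZY2; rewrite ZNY /= => Y21 Y12.
have Y1_2 : Y.1 = Y.2 by apply/eqP; rewrite eqEsubset Y12 Y21.
have [Y_disj _] := C_disj Y YC.
have Y1_0 : Y.1 = set0 by have := disjoint_setI0 Y_disj; rewrite -Y1_2 setIid.
have Y0 : Y = empty_signed T.
  by case: Y YC Y1_2 Y1_0 {ZNY Y_disj Y12 Y21} => Y1 Y2 /= _ <- ->.
by move: C_neq0; rewrite -Y0 YC.
Qed.

Theorem lemma8p1 (T : finType) (E : {set T}) (C : {set signed T}) (e : T) :
  is_OM E C -> e \in E ->
  (is_loop C e -> (pure E C <-> pure (E :\ e) (deletion C e))) /\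
  (is_coloop C e -> (pure E C <-> pure (E :\ e) (contraction C e))).
Proof.
move=> C_OM eE; split; first exact: pure_deletion_loop.
move=> e_coloop; rewrite (contraction_coloop C_OM e_coloop).
apply: pure_setD1_avoid => // X XC.
by move/forallP: e_coloop => /(_ X)/implyP; apply.
Qed.
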